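(* In the setting described in the context: (1) If the model is DUR with constants $d,k$ and the parametrisation $(\tilde X,\Theta)$ is GTIP, then for all sufficiently small $\alpha>0$, $\mathbf E\{e^{\alpha X}\mid Y=y,\Theta=\theta\}\le e^{\alpha\theta}(1-\alpha d/2)$ for all $\theta>k$, and $\mathbf E\{e^{-\alpha X}\mid Y=y,\Theta=\theta\}\le e^{-\alpha\theta}(1-\alpha d/2)$ for all $\theta<-k$. (2) If the model is PUR with constants $d,k$ and the parametrisation $(X,\Theta)$ is GTIP, then for all sufficiently small $\alpha>0$, $\mathbf E\{e^{\alpha(y-\tilde X)}\mid Y=y,\Theta=\theta\}\le e^{\alpha\theta}(1-\alpha d/2)$ for all $\theta>k$, and $\mathbf E\{e^{-\alpha(y-\tilde X)}\mid Y=y,\Theta=\theta\}\le e^{-\alpha\theta}(1-\alpha d/2)$ for all $\theta<-k$.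
   Context: Fix an observed value $y\in\mathbb R$. Consider the model $Y=X+Z_1$, $X=\Theta+Z_2$, where $Z_1,Z_2$ are independent real random variables, independent of $\Theta$, whose distributions are symmetric about $0$ and have continuous, bounded, everywhere positive Lebesgue densities $f_1,f_2$; $\Theta$ is given the improper flat (Lebesgue) prior on $\mathbb R$, and the posterior $\mathcal L(X,\Theta\mid Y=y)$ is proper. Write $\tilde X=X-\Theta$. A parametrisation $(U,\Theta)$, $U\in\{X,\tilde X\}$, is GTIP (geometrically tight in parameter) if there are constants $a,b>0$ not depending on $\theta$ such that $\mathbf P(|U|>x\mid Y=y,\Theta=\theta)\le ae^{-bx}$ for all $\theta\in\mathbb R$ and $x\ge0$. The model is DUR (data uniformly relevant) with constants $d,k>0$ if $|\mathbf E\{X\mid Y=y,\Theta=\theta\}|\le|\theta|-d$ for all $|\theta|>k$; it is PUR (parameter uniformly relevant) with constants $d,k>0$ if $\operatorname{sgn}(\theta)\,\mathbf E\{X-y\mid Y=y,\Theta=\theta\}\ge d$ for all $|\theta|>k$. *)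

From Stdlib Require Import Reals Lra.
Open Scope R_scope.

Definition Rint (f : R -> R) (a b v : R) : Prop :=
  exists pr : Riemann_integrable f a b, RiemannInt pr = v.

Definition ImpInt (f : R -> R) (l : R) : Prop :=
  (forall a b, exists v, Rint f a b v) /\
  (forall eps, 0 < eps -> exists M, forall a b v,
      a <= - M -> M <= b -> Rint f a b v -> Rabs (v - l) < eps).

Definition good_density (f : R -> R) : Prop :=
  continuity f /\
  (exists B, forall x, Rabs (f x) <= B) /\
  (forall x, 0 < f x) /\
  (forall x, f (- x) = f x) /\
  ImpInt f 1.

(* Unnormalised conditional density of X given Y = y, Theta = th:
   f1(y - x) f2(x - th). *)
Definition wgt (f1 f2 : R -> R) (y th : R) (x : R) : R :=
  f1 (y - x) * f2 (x - th).

Definition CondExp (f1 f2 : R -> R) (y th : R) (g : R -> R) (v : R) : Prop :=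
  exists N Z, ImpInt (fun x => g x * wgt f1 f2 y th x) N /\
              ImpInt (wgt f1 f2 y th) Z /\ v = N / Z.

(* P(|X - c| > r | Y = y, Theta = th) <= p, written as
   1 - P(c - r <= X <= c + r | ...). *)
Definition CondTailLe (f1 f2 : R -> R) (y th c r p : R) : Prop :=
  forall Z I, ImpInt (wgt f1 f2 y th) Z ->
              Rint (wgt f1 f2 y th) (c - r) (c + r) I ->
              1 - I / Z <= p.

(* GTIP for the parametrisation (X, Theta): U = X (centre c = 0). *)
Definition GTIP_X (f1 f2 : R -> R) (y : R) : Prop :=
  exists a b, 0 < a /\ 0 < b /\
    forall th x, 0 <= x -> CondTailLe f1 f2 y th 0 x (a * exp (- (b * x))).

(* GTIP for the parametrisation (Xtilde, Theta): U = X - Theta (centre c = th). *)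
Definition GTIP_Xt (f1 f2 : R -> R) (y : R) : Prop :=
  exists a b, 0 < a /\ 0 < b /\
    forall th x, 0 <= x -> CondTailLe f1 f2 y th th x (a * exp (- (b * x))).

Definition sgn (t : R) : R :=
  if Rlt_dec 0 t then 1 else if Rlt_dec t 0 then -1 else 0.

Definition DUR (f1 f2 : R -> R) (y d k : R) : Prop :=
  0 < d /\ 0 < k /\
  forall th, k < Rabs th ->
    exists v, CondExp f1 f2 y th (fun x => x) v /\ Rabs v <= Rabs th - d.

Definition PUR (f1 f2 : R -> R) (y d k : R) : Prop :=
  0 < d /\ 0 < k /\
  forall th, k < Rabs th ->
    exists v, CondExp f1 f2 y th (fun x => x - y) v /\ d <= sgn th * v.

(* Fix theta and let w(x) = f1(y - x) f2(x - theta) be the unnormalised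
   conditional density of X, with mass Z.  For u = s (x - e), |s| = 1, and
   0 < al <= b/4 the elementary inequality
       exp (al u) <= 1 + al u + al^2 (64 / b^2) exp (b/2 |u|)
   integrated against w gives  E exp (al u) <= 1 + al E u + al^2 K.
   The constant K is uniform in theta because the geometric tail bound
   P(|X - c| > r) <= a exp (- b r) yields E exp (b/2 |X - c|) <= 1 + a e^{b/2},
   proved by peeling off annuli of width 1.  Relevance gives E u <= -d, so
   for al small the bound is at most 1 - al d / 2.  Part (1) uses DUR with
   u = +-(x - theta) and tightness of X - Theta (centre c = theta); part (2)
   uses PUR with u = -+(x - y) and tightness of X (centre c = 0). *)

From Stdlib Require Import Reals Lra Lia FunctionalExtensionality ClassicalEpsilon.
Open Scope R_scope.

Definition loc_int (f : R -> R) : Prop := forall a b, exists v, Rint f a b v.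

Lemma continuity_loc_int f : continuity f -> loc_int f.
Proof.
  intros f_cont a b. destruct (Rle_dec a b) as [Hab | Hab].
  - assert (pr : Riemann_integrable f a b)
      by (apply continuity_implies_RiemannInt; auto).
    exists (RiemannInt pr), pr; reflexivity.
  - assert (pr : Riemann_integrable f b a)
      by (apply continuity_implies_RiemannInt; auto; lra).
    exists (RiemannInt (RiemannInt_P1 pr)), (RiemannInt_P1 pr); reflexivity.
Qed.

Lemma Rint_unique f a b u v : Rint f a b u -> Rint f a b v -> u = v.
Proof. intros [p1 <-] [p2 <-]. apply RiemannInt_P5. Qed.

Lemma Rint_ext f g a b v : (forall x, f x = g x) -> Rint f a b v -> Rint g a b v.
Proof. intros Hfg. replace g with f; auto. apply functional_extensionality; auto. Qed.

Lemma Rint_lin f g a b l u v : Rint f a b u -> Rint g a b v ->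
  Rint (fun x => f x + l * g x) a b (u + l * v).
Proof.
  intros [p1 <-] [p2 <-]. exists (RiemannInt_P10 l p1 p2). apply RiemannInt_P13.
Qed.

Lemma Rint_zero a b : Rint (fun _ => 0) a b 0.
Proof.
  apply (Rint_ext (fct_cte 0)); [reflexivity |].
  exists (RiemannInt_P14 a b 0). rewrite RiemannInt_P15. ring.
Qed.

Lemma Rint_scale f a b p u : Rint f a b u -> Rint (fun x => p * f x) a b (p * u).
Proof.
  intro Hu. replace (p * u) with (0 + p * u) by ring.
  apply (Rint_ext (fun x => 0 + p * f x)); [intro; ring |].
  exact (Rint_lin _ _ _ _ p _ _ (Rint_zero a b) Hu).
Qed.

Lemma Rint_mono f g a b u v : a <= b -> (forall x, a <= x <= b -> f x <= g x) ->
  Rint f a b u -> Rint g a b v -> u <= v.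
Proof.
  intros Hab Hfg [p1 <-] [p2 <-]. apply RiemannInt_P19; auto.
  intros; apply Hfg; lra.
Qed.

Lemma Rint_chasles f a b c u v w :
  Rint f a b u -> Rint f b c v -> Rint f a c w -> w = u + v.
Proof. intros [p1 <-] [p2 <-] [p3 <-]. symmetry; apply RiemannInt_P26. Qed.

Lemma Rint_point f c v : Rint f c c v -> v = 0.
Proof. intro Hv. pose proof (Rint_chasles _ _ _ _ _ _ _ Hv Hv Hv). lra. Qed.

Lemma Rint_nonneg f a b v : a <= b -> (forall x, a <= x <= b -> 0 <= f x) ->
  Rint f a b v -> 0 <= v.
Proof. intros Hab Hf. apply (Rint_mono _ _ _ _ _ _ Hab Hf (Rint_zero a b)). Qed.

Lemma Rint_enlarge f A' A B B' u v : loc_int f ->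
  A' <= A -> A <= B -> B <= B' ->
  (forall x, A' <= x <= A -> 0 <= f x) -> (forall x, B <= x <= B' -> 0 <= f x) ->
  Rint f A B u -> Rint f A' B' v -> u <= v.
Proof.
  intros f_int HA' HAB HB' left_nn right_nn Hu Hv.
  destruct (f_int A' A) as [p Hp], (f_int B B') as [q Hq], (f_int A' B) as [r Hr].
  pose proof (Rint_chasles _ _ _ _ _ _ _ Hp Hu Hr).
  pose proof (Rint_chasles _ _ _ _ _ _ _ Hr Hq Hv).
  pose proof (Rint_nonneg _ _ _ _ HA' left_nn Hp).
  pose proof (Rint_nonneg _ _ _ _ HB' right_nn Hq). lra.
Qed.

Lemma ImpInt_ext f g l : (forall x, f x = g x) -> ImpInt f l -> ImpInt g l.
Proof. intros Hfg. replace g with f; auto. apply functional_extensionality; auto. Qed.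

Lemma ImpInt_lin f g p q l1 l2 : ImpInt f l1 -> ImpInt g l2 ->
  ImpInt (fun x => p * f x + q * g x) (p * l1 + q * l2).
Proof.
  intros [f_int Hf] [g_int Hg]. split.
  - intros a b. destruct (f_int a b) as [u Hu], (g_int a b) as [v Hv].
    exists (p * u + q * v). exact (Rint_lin _ _ _ _ q _ _ (Rint_scale _ _ _ p _ Hu) Hv).
  - intros eps Heps.
    set (e := eps / (2 * (Rabs p + Rabs q + 1))).
    pose proof (Rabs_pos p); pose proof (Rabs_pos q).
    assert (He : 0 < e) by (unfold e; apply Rdiv_lt_0_compat; lra).
    assert (Hpq : (Rabs p + Rabs q) * e < eps).
    { assert (e * (2 * (Rabs p + Rabs q + 1)) = eps) by (unfold e; field; lra). nra. }
    destruct (Hf e He) as [M1 HM1], (Hg e He) as [M2 HM2].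
    exists (Rmax M1 M2). intros a b w Ha Hb Hw.
    pose proof (Rmax_l M1 M2); pose proof (Rmax_r M1 M2).
    destruct (f_int a b) as [u Hu], (g_int a b) as [v Hv].
    rewrite (Rint_unique _ _ _ _ _ Hw (Rint_lin _ _ _ _ q _ _ (Rint_scale _ _ _ p _ Hu) Hv)).
    assert (Eu : Rabs (u - l1) < e) by (apply (HM1 a b); auto; lra).
    assert (Ev : Rabs (v - l2) < e) by (apply (HM2 a b); auto; lra).
    replace (p * u + q * v - (p * l1 + q * l2)) with (p * (u - l1) + q * (v - l2)) by ring.
    eapply Rle_lt_trans; [apply Rabs_triang |]. rewrite !Rabs_mult.
    assert (Rabs p * Rabs (u - l1) <= Rabs p * e) by (apply Rmult_le_compat_l; lra).
    assert (Rabs q * Rabs (v - l2) <= Rabs q * e) by (apply Rmult_le_compat_l; lra).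
    lra.
Qed.

Lemma ImpInt_scale f p l : ImpInt f l -> ImpInt (fun x => p * f x) (p * l).
Proof.
  intro Hf. replace (p * l) with (p * l + 0 * l) by ring.
  apply (ImpInt_ext (fun x => p * f x + 0 * f x)); [intro; ring |].
  exact (ImpInt_lin _ _ p 0 _ _ Hf Hf).
Qed.

Lemma ImpInt_window f l eps : ImpInt f l -> 0 < eps ->
  exists M0, 0 <= M0 /\ forall M v, M0 <= M -> Rint f (- M) M v -> Rabs (v - l) < eps.
Proof.
  intros [_ Hf] Heps. destruct (Hf eps Heps) as [M HM].
  exists (Rabs M). split; [apply Rabs_pos |].
  intros M' v HM' Hv. pose proof (Rle_abs M). apply (HM (- M') M'); auto; lra.
Qed.

Lemma ImpInt_le_bound f l Bd : ImpInt f l ->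
  (forall A B v, A <= B -> Rint f A B v -> v <= Bd) -> l <= Bd.
Proof.
  intros Hf Hbd. apply Rle_plus_epsilon. intros eps Heps.
  destruct (ImpInt_window f l eps Hf Heps) as [M [HM0 HM]].
  destruct (proj1 Hf (- M) M) as [v Hv].
  pose proof (Hbd (- M) M v ltac:(lra) Hv).
  pose proof (HM M v (Rle_refl M) Hv) as Hlv. apply Rabs_def2 in Hlv. lra.
Qed.

Lemma ImpInt_partial_le f l A B v : (forall x, 0 <= f x) -> ImpInt f l ->
  A <= B -> Rint f A B v -> v <= l.
Proof.
  intros f_nn Hf HAB Hv. apply Rle_plus_epsilon. intros eps Heps.
  destruct (ImpInt_window f l eps Hf Heps) as [M0 [HM0 HM]].
  set (M := Rmax M0 (Rmax (- A) B)).
  pose proof (Rmax_l M0 (Rmax (- A) B)); pose proof (Rmax_r M0 (Rmax (- A) B)).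
  pose proof (Rmax_l (- A) B); pose proof (Rmax_r (- A) B).
  destruct (proj1 Hf (- M) M) as [w Hw].
  assert (v <= w)
    by (apply (Rint_enlarge f (- M) A B M v w (proj1 Hf)); auto; unfold M; lra).
  pose proof (HM M w ltac:(unfold M; lra) Hw) as Hwl. apply Rabs_def2 in Hwl. lra.
Qed.

Lemma ImpInt_mono f g l1 l2 : (forall x, f x <= g x) ->
  ImpInt f l1 -> ImpInt g l2 -> l1 <= l2.
Proof.
  intros Hfg Hf Hg. apply Rle_plus_epsilon. intros eps Heps.
  destruct (ImpInt_window f l1 (eps / 2) Hf ltac:(lra)) as [M1 [HM1 Hl1]].
  destruct (ImpInt_window g l2 (eps / 2) Hg ltac:(lra)) as [M2 [HM2 Hl2]].
  set (M := Rmax M1 M2). pose proof (Rmax_l M1 M2); pose proof (Rmax_r M1 M2).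
  destruct (proj1 Hf (- M) M) as [u Hu], (proj1 Hg (- M) M) as [v Hv].
  assert (u <= v) by (apply (Rint_mono f g (- M) M); auto; unfold M; lra).
  pose proof (Hl1 M u ltac:(unfold M; lra) Hu) as E1.
  pose proof (Hl2 M v ltac:(unfold M; lra) Hv) as E2.
  apply Rabs_def2 in E1; apply Rabs_def2 in E2. lra.
Qed.

Lemma ImpInt_of_bounded f Bd : loc_int f -> (forall x, 0 <= f x) ->
  (forall A B v, A <= B -> Rint f A B v -> v <= Bd) -> exists l, ImpInt f l.
Proof.
  intros f_int f_nn Hbd.
  pose (S n := proj1_sig (constructive_indefinite_description _ (f_int (- INR n) (INR n)))).
  assert (HS : forall n, Rint f (- INR n) (INR n) (S n))
    by (intro n; unfold S; destruct constructive_indefinite_description; auto).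
  assert (S_mono : forall n m, (n <= m)%nat -> S n <= S m).
  { intros n m Hnm. apply le_INR in Hnm. pose proof (pos_INR n).
    apply (Rint_enlarge f (- INR m) (- INR n) (INR n) (INR m)); auto; lra. }
  assert (S_grow : Un_growing S) by (intro n; apply S_mono; lia).
  assert (S_ub : has_ub S).
  { exists Bd. intros x [n ->]. pose proof (pos_INR n). apply (Hbd (- INR n) (INR n)); auto; lra. }
  destruct (growing_cv S S_grow S_ub) as [l Hl]. exists l. split; [exact f_int |].
  intros eps Heps. destruct (Hl eps Heps) as [N HN]. exists (INR N).
  intros a b v Ha Hb Hv. pose proof (pos_INR N).
  assert (S N <= v) by (apply (Rint_enlarge f a (- INR N) (INR N) b); auto; lra).
  destruct (INR_unbounded (Rmax (- a) b)) as [m Hm].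
  pose proof (Rmax_l (- a) b); pose proof (Rmax_r (- a) b).
  assert (v <= S m) by (apply (Rint_enlarge f (- INR m) a b (INR m)); auto; lra).
  pose proof (growing_ineq S l S_grow Hl m).
  specialize (HN N (Nat.le_refl N)). unfold Rdist in HN. apply Rabs_def2 in HN.
  apply Rabs_def1; lra.
Qed.

Lemma ImpInt_dominated f g l : loc_int f -> (forall x, 0 <= f x <= g x) ->
  ImpInt g l -> exists m, ImpInt f m.
Proof.
  intros f_int Hfg Hg. apply (ImpInt_of_bounded f l f_int); [intro x; apply Hfg |].
  intros A B v HAB Hv. destruct (proj1 Hg A B) as [u Hu].
  assert (v <= u) by (apply (Rint_mono f g A B); auto; intros; apply Hfg).
  assert (u <= l) by (apply (ImpInt_partial_le g l A B); auto; intro x; pose proof (Hfg x); lra).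
  lra.
Qed.

Lemma exp_le_compat x y : x <= y -> exp x <= exp y.
Proof.
  intro Hxy. destruct (Rle_lt_or_eq_dec _ _ Hxy) as [Hlt | ->]; [| lra].
  left; apply exp_increasing; auto.
Qed.

Lemma exp_taylor_remainder t : exp t - 1 - t <= t ^ 2 * exp (Rabs t).
Proof.
  pose proof (exp_pos t). pose proof (exp_ineq1_le t). pose proof (exp_ineq1_le (- t)).
  assert (exp (- t) * exp t = 1)
    by (rewrite <- exp_plus; replace (- t + t) with 0 by ring; apply exp_0).
  assert (Hmv : exp t - 1 <= t * exp t) by nra.
  destruct (Rle_dec 0 t).
  - rewrite Rabs_right by lra. nra.
  - rewrite Rabs_left by lra. nra.
Qed.

Lemma sqr_le_exp v : 0 <= v -> v ^ 2 <= 4 * exp v.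
Proof.
  intro Hv. pose proof (exp_ineq1_le (v / 2)).
  assert (exp v = exp (v / 2) * exp (v / 2)) by (rewrite <- exp_plus; f_equal; field).
  nra.
Qed.

Lemma exp_quadratic_bound al b u : 0 < b -> 0 < al -> al <= b / 4 ->
  exp (al * u) <= 1 + al * u + al ^ 2 * (64 / b ^ 2) * exp (b / 2 * Rabs u).
Proof.
  intros b_pos al_pos al_le.
  pose proof (Rabs_pos u).
  assert (Hu2 : u ^ 2 <= 64 / b ^ 2 * exp (b / 4 * Rabs u)).
  { pose proof (sqr_le_exp (b / 4 * Rabs u) ltac:(nra)) as Hsq.
    replace ((b / 4 * Rabs u) ^ 2) with ((b / 4) ^ 2 * u ^ 2) in Hsq
      by (rewrite <- (pow2_abs u); ring).
    apply (Rmult_le_reg_l ((b / 4) ^ 2)); [nra |].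
    replace ((b / 4) ^ 2 * (64 / b ^ 2 * exp (b / 4 * Rabs u))) with (4 * exp (b / 4 * Rabs u))
      by (field; lra).
    lra. }
  assert (Hexp : exp (al * Rabs u) * exp (b / 4 * Rabs u) <= exp (b / 2 * Rabs u))
    by (rewrite <- exp_plus; apply exp_le_compat; nra).
  pose proof (exp_taylor_remainder (al * u)) as Hrem.
  rewrite Rabs_mult, (Rabs_right al) in Hrem by lra.
  pose proof (exp_pos (al * Rabs u)).
  assert (0 < al ^ 2 * (64 / b ^ 2)) by (apply Rmult_lt_0_compat; [nra | apply Rdiv_lt_0_compat; nra]).
  assert (al ^ 2 * u ^ 2 * exp (al * Rabs u)
          <= al ^ 2 * (64 / b ^ 2 * exp (b / 4 * Rabs u)) * exp (al * Rabs u))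
    by (apply Rmult_le_compat_r; [lra | apply Rmult_le_compat_l; nra]).
  replace ((al * u) ^ 2) with (al ^ 2 * u ^ 2) in Hrem by ring.
  nra.
Qed.

(* Crude domination used to show that exp (al u) w is integrable. *)
Lemma exp_small_rate al b u : 0 <= al -> al <= b / 2 -> exp (al * u) <= exp (b / 2 * Rabs u).
Proof.
  intros. apply exp_le_compat. pose proof (Rle_abs u). pose proof (Rabs_pos u).
  destruct (Rle_dec 0 u); nra.
Qed.

Definition exp_tilt (beta c : R) (w : R -> R) (x : R) : R := exp (beta * Rabs (x - c)) * w x.

Section ExponentialMoment.

Variables (w : R -> R) (Z a b c : R).
Hypotheses (w_cont : continuity w) (w_nonneg : forall x, 0 <= w x) (w_int : ImpInt w Z)
  (a_pos : 0 < a) (b_pos : 0 < b)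
  (w_tail : forall r I, 0 <= r -> Rint w (c - r) (c + r) I -> Z - I <= a * exp (- (b * r)) * Z).

Lemma exp_tilt_continuous : continuity (exp_tilt (b / 2) c w).
Proof. unfold exp_tilt. reg. Qed.

Lemma exp_tilt_nonneg x : 0 <= exp_tilt (b / 2) c w x.
Proof. unfold exp_tilt. pose proof (exp_pos (b / 2 * Rabs (x - c))). pose proof (w_nonneg x). nra. Qed.

(* On the annulus r <= |x - c| <= r' the tilt is at most exp (b/2 r'), so
   enlarging the window adds at most exp (b/2 r') times the added mass. *)
Lemma exp_tilt_annulus r r' I I' J J' : 0 <= r <= r' ->
  Rint w (c - r) (c + r) I -> Rint w (c - r') (c + r') I' ->
  Rint (exp_tilt (b / 2) c w) (c - r) (c + r) J ->
  Rint (exp_tilt (b / 2) c w) (c - r') (c + r') J' ->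
  J' - J <= exp (b / 2 * r') * (I' - I).
Proof.
  intros Hr HI HI' HJ HJ'.
  set (D := fun x => exp (b / 2 * r') * w x + (-1) * exp_tilt (b / 2) c w x).
  assert (D_nn : forall x, Rabs (x - c) <= r' -> 0 <= D x).
  { intros x Hx. unfold D, exp_tilt.
    assert (exp (b / 2 * Rabs (x - c)) <= exp (b / 2 * r'))
      by (apply exp_le_compat; apply Rmult_le_compat_l; lra).
    pose proof (w_nonneg x). nra. }
  assert (D_int : loc_int D) by (apply continuity_loc_int; unfold D, exp_tilt; reg).
  assert (exp (b / 2 * r') * I + (-1) * J <= exp (b / 2 * r') * I' + (-1) * J').
  { apply (Rint_enlarge D (c - r') (c - r) (c + r) (c + r')); try lra.
    - exact D_int.
    - intros x Hx. apply D_nn. rewrite Rabs_left1; lra.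
    - intros x Hx. apply D_nn. rewrite Rabs_right; lra.
    - apply Rint_lin; [apply Rint_scale |]; assumption.
    - apply Rint_lin; [apply Rint_scale |]; assumption. }
  lra.
Qed.

(* Invariant of the annulus-by-annulus peeling: with p = exp (b/2 n),
   J_n + p (Z - I_n) <= Z (1 + a E - a E / p), E = exp (b/2). *)
Lemma exp_tilt_peeling (n : nat) I J :
  Rint w (c - INR n) (c + INR n) I ->
  Rint (exp_tilt (b / 2) c w) (c - INR n) (c + INR n) J ->
  J + exp (b / 2 * INR n) * (Z - I)
    <= Z * (1 + a * exp (b / 2) - a * exp (b / 2) / exp (b / 2 * INR n)).
Proof.
  assert (tilt_int := continuity_loc_int _ exp_tilt_continuous).
  set (E := exp (b / 2)).
  assert (E_ge1 : 1 <= E) by (unfold E; pose proof (exp_ineq1_le (b / 2)); lra).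
  revert I J. induction n as [| n IH]; intros I J HI HJ.
  - simpl in HI, HJ. rewrite Rminus_0_r, Rplus_0_r in HI, HJ.
    rewrite (Rint_point _ _ _ HI), (Rint_point _ _ _ HJ), Rmult_0_r, exp_0.
    unfold Rdiv. rewrite Rinv_1. lra.
  - destruct (continuity_loc_int w w_cont (c - INR n) (c + INR n)) as [I0 HI0].
    destruct (tilt_int (c - INR n) (c + INR n)) as [J0 HJ0].
    specialize (IH I0 J0 HI0 HJ0).
    set (p := exp (b / 2 * INR n)) in IH.
    assert (p_pos : 0 < p) by apply exp_pos.
    assert (Hp1 : exp (b / 2 * INR (S n)) = p * E)
      by (rewrite S_INR; unfold p, E; rewrite <- exp_plus; f_equal; ring).
    pose proof (pos_INR n).
    assert (Hann : J - J0 <= p * E * (I - I0)).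
    { rewrite <- Hp1. apply (exp_tilt_annulus (INR n) (INR (S n))); auto.
      rewrite S_INR; lra. }
    assert (Htail : Z - I0 <= a * / (p * p) * Z).
    { replace (/ (p * p)) with (exp (- (b * INR n))); [apply (w_tail (INR n)); auto |].
      unfold p. rewrite <- exp_plus, <- exp_Ropp. f_equal. lra. }
    assert (I0_le : I0 <= Z) by (apply (ImpInt_partial_le w Z (c - INR n) (c + INR n)); auto; lra).
    rewrite Hp1.
    assert (Hgrow : (p * E - p) * (Z - I0) <= (p * E - p) * (a * / (p * p) * Z))
      by (apply Rmult_le_compat_l; nra).
    replace ((p * E - p) * (a * / (p * p) * Z)) with (a * E * Z / p - a * Z / p) in Hgrow
      by (field; lra).
    replace (Z * (1 + a * E - a * E / (p * E)))
      with (Z * (1 + a * E - a * E / p) + (a * E * Z / p - a * Z / p)) by (field; lra).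
    lra.
Qed.

(* Since I_n <= Z, the invariant bounds every partial integral of the tilt. *)
Lemma exp_tilt_partial_bound A B v : A <= B ->
  Rint (exp_tilt (b / 2) c w) A B v -> v <= Z * (1 + a * exp (b / 2)).
Proof.
  intros HAB Hv.
  destruct (INR_unbounded (Rmax (Rabs (A - c)) (Rabs (B - c)))) as [n Hn].
  pose proof (Rmax_l (Rabs (A - c)) (Rabs (B - c))).
  pose proof (Rmax_r (Rabs (A - c)) (Rabs (B - c))).
  pose proof (Rle_abs (A - c)); pose proof (Rle_abs (- (A - c))).
  pose proof (Rle_abs (B - c)); pose proof (Rle_abs (- (B - c))).
  rewrite Rabs_Ropp in *.
  destruct (continuity_loc_int w w_cont (c - INR n) (c + INR n)) as [I HI].
  destruct (continuity_loc_int _ exp_tilt_continuous (c - INR n) (c + INR n)) as [J HJ].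
  pose proof (exp_tilt_peeling n I J HI HJ).
  assert (v <= J).
  { apply (Rint_enlarge (exp_tilt (b / 2) c w) (c - INR n) A B (c + INR n)); try lra;
      auto using continuity_loc_int, exp_tilt_continuous, exp_tilt_nonneg. }
  assert (I <= Z) by (apply (ImpInt_partial_le w Z (c - INR n) (c + INR n)); auto; lra).
  set (p := exp (b / 2 * INR n)) in *.
  assert (0 < p) by apply exp_pos.
  assert (0 <= a * exp (b / 2) / p)
    by (unfold Rdiv; apply Rmult_le_pos;
        [pose proof (exp_pos (b / 2)); nra | left; apply Rinv_0_lt_compat; lra]).
  assert (0 <= I) by (apply (Rint_nonneg w (c - INR n) (c + INR n)); auto; lra).
  assert (0 <= p * (Z - I)) by nra.
  assert (0 <= Z * (a * exp (b / 2) / p)) by nra.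
  nra.
Qed.

Lemma exp_tilt_moment : exists J, ImpInt (exp_tilt (b / 2) c w) J /\ J <= Z * (1 + a * exp (b / 2)).
Proof.
  destruct (ImpInt_of_bounded _ _ (continuity_loc_int _ exp_tilt_continuous)
              exp_tilt_nonneg exp_tilt_partial_bound) as [J HJ].
  exists J. split; [exact HJ |]. exact (ImpInt_le_bound _ _ _ HJ exp_tilt_partial_bound).
Qed.

End ExponentialMoment.

(* Constant of the quadratic term in the drift bound; r = |c - e| is the
   distance between the centre of tightness and the centre of the drift. *)
Definition drift_const (a b r : R) : R :=
  64 / b ^ 2 * exp (b / 2 * r) * (1 + a * exp (b / 2)).

Lemma drift_const_pos a b r : 0 < a -> 0 < b -> 0 < drift_const a b r.
Proof.
  intros. unfold drift_const. pose proof (exp_pos (b / 2 * r)). pose proof (exp_pos (b / 2)).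
  apply Rmult_lt_0_compat; [apply Rmult_lt_0_compat |]; [apply Rdiv_lt_0_compat | |]; nra.
Qed.

Lemma exp_abs_shift beta s x c e : 0 <= beta -> Rabs s = 1 ->
  exp (beta * Rabs (s * (x - e))) <= exp (beta * Rabs (c - e)) * exp (beta * Rabs (x - c)).
Proof.
  intros beta_nn Hs. rewrite <- exp_plus. apply exp_le_compat.
  rewrite Rabs_mult, Hs, Rmult_1_l.
  replace (x - e) with ((x - c) + (c - e)) by ring.
  pose proof (Rabs_triang (x - c) (c - e)). nra.
Qed.

Lemma weight_mgf_bound w Z a b c e s L al :
  continuity w -> (forall x, 0 <= w x) -> ImpInt w Z -> 0 < a -> 0 < b -> Rabs s = 1 ->
  (forall r I, 0 <= r -> Rint w (c - r) (c + r) I -> Z - I <= a * exp (- (b * r)) * Z) ->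
  ImpInt (fun x => s * (x - e) * w x) L -> 0 < al -> al <= b / 4 ->
  exists N, ImpInt (fun x => exp (al * (s * (x - e))) * w x) N /\
            N <= Z + al * L + al ^ 2 * drift_const a b (Rabs (c - e)) * Z.
Proof.
  intros w_cont w_nn HZ a_pos b_pos Hs w_tail HL al_pos al_le.
  set (Ce := exp (b / 2 * Rabs (c - e))).
  assert (Ce_pos : 0 < Ce) by apply exp_pos.
  assert (c64_pos : 0 < 64 / b ^ 2) by (apply Rdiv_lt_0_compat; nra).
  destruct (exp_tilt_moment w Z a b c w_cont w_nn HZ a_pos b_pos w_tail) as [J [HJ J_le]].
  assert (shift : forall x, exp (b / 2 * Rabs (s * (x - e))) <= Ce * exp (b / 2 * Rabs (x - c)))
    by (intro x; apply exp_abs_shift; lra).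
  destruct (ImpInt_dominated (fun x => exp (al * (s * (x - e))) * w x)
              (fun x => Ce * exp_tilt (b / 2) c w x) (Ce * J)) as [N HN].
  - apply continuity_loc_int; reg.
  - intro x. unfold exp_tilt. pose proof (w_nn x). pose proof (exp_pos (al * (s * (x - e)))).
    pose proof (exp_small_rate al b (s * (x - e)) ltac:(lra) ltac:(lra)). pose proof (shift x).
    split; nra.
  - apply ImpInt_scale; exact HJ.
  - exists N. split; [exact HN |].
    set (K1 := al ^ 2 * (64 / b ^ 2) * Ce).
    assert (K1_nn : 0 <= K1)
      by (unfold K1; apply Rmult_le_pos; [apply Rmult_le_pos; nra | lra]).
    assert (HN_le : N <= 1 * (1 * Z + al * L) + K1 * J).
    { eapply ImpInt_mono;
        [| exact HN | exact (ImpInt_lin _ _ 1 K1 _ _ (ImpInt_lin _ _ 1 al _ _ HZ HL) HJ)].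
      intro x; simpl. unfold exp_tilt, K1. pose proof (w_nn x).
      set (C := al ^ 2 * (64 / b ^ 2)).
      assert (0 <= C) by (unfold C; apply Rmult_le_pos; nra).
      assert (exp (al * (s * (x - e))) * w x
              <= (1 + al * (s * (x - e)) + C * exp (b / 2 * Rabs (s * (x - e)))) * w x)
        by (apply Rmult_le_compat_r; [| apply exp_quadratic_bound]; auto).
      assert (C * exp (b / 2 * Rabs (s * (x - e))) * w x
              <= C * (Ce * exp (b / 2 * Rabs (x - c))) * w x)
        by (apply Rmult_le_compat_r; [| apply Rmult_le_compat_l]; auto).
      lra. }
    assert (K1 * J <= al ^ 2 * drift_const a b (Rabs (c - e)) * Z).
    { replace (al ^ 2 * drift_const a b (Rabs (c - e)) * Z) with (K1 * (Z * (1 + a * exp (b / 2))))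
        by (unfold K1, Ce, drift_const; ring).
      apply Rmult_le_compat_l; auto. }
    lra.
Qed.

Lemma wgt_continuous f1 f2 y th : good_density f1 -> good_density f2 ->
  continuity (wgt f1 f2 y th).
Proof. intros [f1_cont _] [f2_cont _]. unfold wgt. reg. Qed.

Lemma wgt_nonneg f1 f2 y th x : good_density f1 -> good_density f2 -> 0 <= wgt f1 f2 y th x.
Proof.
  intros (_ & _ & f1_pos & _) (_ & _ & f2_pos & _). unfold wgt.
  left; apply Rmult_lt_0_compat; auto.
Qed.

(* A geometric tail bound forces the total mass to be positive: with Z = 0
   it would read 1 <= a exp (- b r) for every r. *)
Lemma tight_mass_pos w Z a b c : (forall x, 0 <= w x) -> ImpInt w Z -> 0 < a -> 0 < b ->
  (forall r I, 0 <= r -> Rint w (c - r) (c + r) I -> 1 - I / Z <= a * exp (- (b * r))) ->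
  0 < Z.
Proof.
  intros w_nn HZ a_pos b_pos tail.
  destruct (proj1 HZ c c) as [I0 HI0].
  assert (Z_nn : I0 <= Z) by (apply (ImpInt_partial_le w Z c c); auto; lra).
  rewrite (Rint_point _ _ _ HI0) in Z_nn.
  destruct (Rle_lt_or_eq_dec 0 Z Z_nn) as [| <-]; auto. exfalso.
  set (r := Rabs (ln a) / b + 1).
  pose proof (Rle_abs (ln a)).
  assert (r_nn : 0 <= r).
  { unfold r, Rdiv. pose proof (Rinv_0_lt_compat b b_pos).
    pose proof (Rmult_le_pos _ (/ b) (Rabs_pos (ln a)) ltac:(lra)). lra. }
  destruct (proj1 HZ (c - r) (c + r)) as [I HI].
  specialize (tail r I r_nn HI). unfold Rdiv in tail. rewrite Rinv_0, Rmult_0_r in tail.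
  assert (a * exp (- (b * r)) < 1).
  { rewrite <- (exp_ln a) at 1 by lra. rewrite <- exp_plus, <- exp_0. apply exp_increasing.
    replace (b * r) with (Rabs (ln a) + b) by (unfold r; field; lra). lra. }
  lra.
Qed.

Lemma cond_mgf_bound f1 f2 y th a b c e m s v d al q g :
  good_density f1 -> good_density f2 -> 0 < a -> 0 < b -> Rabs s = 1 ->
  (forall r, 0 <= r -> CondTailLe f1 f2 y th c r (a * exp (- (b * r)))) ->
  CondExp f1 f2 y th (fun x => x - m) v -> s * (v + m - e) <= - d ->
  0 < al -> al <= b / 4 -> al * drift_const a b (Rabs (c - e)) <= d / 2 ->
  (forall x, g x = q * exp (al * (s * (x - e)))) -> 0 <= q ->
  exists V, CondExp f1 f2 y th g V /\ V <= q * (1 - al * d / 2).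
Proof.
  intros g1 g2 a_pos b_pos Hs tail [Nm [Z [HNm [HZ ->]]]] drift al_pos al_le al_small Hg q_nn.
  set (w := wgt f1 f2 y th) in *.
  assert (w_nn : forall x, 0 <= w x) by (intro; apply wgt_nonneg; auto).
  assert (Z_pos : 0 < Z)
    by (apply (tight_mass_pos w Z a b c); auto; intros r I r_nn; exact (tail r r_nn Z I HZ)).
  assert (w_tail : forall r I, 0 <= r -> Rint w (c - r) (c + r) I -> Z - I <= a * exp (- (b * r)) * Z).
  { intros r I r_nn HI. pose proof (tail r r_nn Z I HZ HI) as Hr.
    apply (Rmult_le_compat_r Z) in Hr; [| lra].
    replace ((1 - I / Z) * Z) with (Z - I) in Hr by (field; lra). exact Hr. }
  assert (HL : ImpInt (fun x => s * (x - e) * w x) (s * Nm + s * (m - e) * Z)).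
  { apply (ImpInt_ext (fun x => s * ((x - m) * w x) + s * (m - e) * w x)); [intro; ring |].
    apply ImpInt_lin; assumption. }
  destruct (weight_mgf_bound w Z a b c e s _ al (wgt_continuous f1 f2 y th g1 g2) w_nn HZ
              a_pos b_pos Hs w_tail HL al_pos al_le) as [N [HN HN_le]].
  exists (q * N / Z). split.
  - exists (q * N), Z. split; [| split; [exact HZ | field; lra]].
    apply (ImpInt_ext (fun x => q * (exp (al * (s * (x - e))) * w x))); [intro x; rewrite Hg; unfold w; ring |].
    apply ImpInt_scale; exact HN.
  - assert (HL_le : s * Nm + s * (m - e) * Z <= - d * Z).
    { replace (s * Nm + s * (m - e) * Z) with (s * (Nm / Z + m - e) * Z) by (field; lra).
      apply Rmult_le_compat_r; lra. }
    assert (al ^ 2 * drift_const a b (Rabs (c - e)) * Z <= al * (d / 2) * Z).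
    { replace (al ^ 2 * drift_const a b (Rabs (c - e)) * Z)
        with (al * (al * drift_const a b (Rabs (c - e))) * Z) by ring.
      apply Rmult_le_compat_r; [lra | apply Rmult_le_compat_l; lra]. }
    assert (N <= Z * (1 - al * d / 2)) by nra.
    unfold Rdiv. rewrite Rmult_assoc. apply Rmult_le_compat_l; [exact q_nn |].
    apply (Rmult_le_reg_r Z); [exact Z_pos |].
    replace (N * / Z * Z) with N by (field; lra). lra.
Qed.

Lemma small_rates b d K : 0 < b -> 0 < d -> 0 < K ->
  exists a0, 0 < a0 /\ forall al, 0 < al -> al < a0 -> al <= b / 4 /\ al * K <= d / 2.
Proof.
  intros b_pos d_pos K_pos. exists (Rmin (b / 4) (d / (2 * K))). split.
  - apply Rmin_pos; [lra | apply Rdiv_lt_0_compat; lra].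
  - intros al al_pos al_lt.
    pose proof (Rmin_l (b / 4) (d / (2 * K))); pose proof (Rmin_r (b / 4) (d / (2 * K))).
    split; [lra |].
    replace (d / 2) with (d / (2 * K) * K) by (field; lra).
    apply Rmult_le_compat_r; lra.
Qed.

Lemma CondExp_ext f1 f2 y th g h v : (forall x, g x = h x) ->
  CondExp f1 f2 y th g v -> CondExp f1 f2 y th h v.
Proof. intros Hgh. replace h with g; auto. apply functional_extensionality; auto. Qed.

Lemma sgn_of_pos t : 0 < t -> sgn t = 1.
Proof. intro Ht. unfold sgn. destruct (Rlt_dec 0 t); [reflexivity | lra]. Qed.

Lemma sgn_of_neg t : t < 0 -> sgn t = -1.
Proof.
  intro Ht. unfold sgn. destruct (Rlt_dec 0 t); [lra |].
  destruct (Rlt_dec t 0); [reflexivity | lra].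
Qed.

(* Part (1): DUR and tightness of X - Theta.  The drift is taken about
   e = theta (u = +-(x - theta)), tightness is about c = theta, so the
   constant drift_const a b 0 does not depend on theta. *)
Lemma DUR_exponential_drift f1 f2 y d k :
  good_density f1 -> good_density f2 -> DUR f1 f2 y d k -> GTIP_Xt f1 f2 y ->
  exists a0, 0 < a0 /\ forall al, 0 < al -> al < a0 ->
    (forall th, k < th -> exists v,
       CondExp f1 f2 y th (fun x => exp (al * x)) v /\
       v <= exp (al * th) * (1 - al * d / 2)) /\
    (forall th, th < - k -> exists v,
       CondExp f1 f2 y th (fun x => exp (- (al * x))) v /\
       v <= exp (- (al * th)) * (1 - al * d / 2)).
Proof.
  intros g1 g2 (d_pos & k_pos & relevant) (a & b & a_pos & b_pos & tight).
  destruct (small_rates b d (drift_const a b 0) b_pos d_pos (drift_const_pos a b 0 a_pos b_pos))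
    as [a0 [a0_pos rates]].
  exists a0. split; [exact a0_pos |]. intros al al_pos al_lt.
  destruct (rates al al_pos al_lt) as [al_le al_small].
  split; intros th hth.
  - destruct (relevant th) as [v [Hv Hv_le]]; [rewrite Rabs_right; lra |].
    rewrite (Rabs_right th) in Hv_le by lra. pose proof (Rle_abs v).
    apply (cond_mgf_bound f1 f2 y th a b th th 0 1 v); auto; try lra.
    + apply Rabs_R1.
    + apply (CondExp_ext _ _ _ _ (fun x => x)); [intro; ring | exact Hv].
    + rewrite Rminus_diag, Rabs_R0. exact al_small.
    + intro x. rewrite <- exp_plus. f_equal. ring.
    + left; apply exp_pos.
  - destruct (relevant th) as [v [Hv Hv_le]]; [rewrite Rabs_left; lra |].
    rewrite (Rabs_left th) in Hv_le by lra. pose proof (Rle_abs (- v)). rewrite Rabs_Ropp in *.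
    apply (cond_mgf_bound f1 f2 y th a b th th 0 (-1) v); auto; try lra.
    + rewrite Rabs_left; lra.
    + apply (CondExp_ext _ _ _ _ (fun x => x)); [intro; ring | exact Hv].
    + rewrite Rminus_diag, Rabs_R0. exact al_small.
    + intro x. rewrite <- exp_plus. f_equal. ring.
    + left; apply exp_pos.
Qed.

(* Part (2): PUR and tightness of X.  The drift is taken about e = y
   (u = -+(x - y)), tightness is about c = 0, so the constant is
   drift_const a b |y|, again uniform in theta. *)
Lemma PUR_exponential_drift f1 f2 y d k :
  good_density f1 -> good_density f2 -> PUR f1 f2 y d k -> GTIP_X f1 f2 y ->
  exists a0, 0 < a0 /\ forall al, 0 < al -> al < a0 ->
    (forall th, k < th -> exists v,
       CondExp f1 f2 y th (fun x => exp (al * (y - (x - th)))) v /\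
       v <= exp (al * th) * (1 - al * d / 2)) /\
    (forall th, th < - k -> exists v,
       CondExp f1 f2 y th (fun x => exp (- (al * (y - (x - th))))) v /\
       v <= exp (- (al * th)) * (1 - al * d / 2)).
Proof.
  intros g1 g2 (d_pos & k_pos & relevant) (a & b & a_pos & b_pos & tight).
  set (K := drift_const a b (Rabs (0 - y))).
  destruct (small_rates b d K b_pos d_pos (drift_const_pos a b _ a_pos b_pos))
    as [a0 [a0_pos rates]].
  exists a0. split; [exact a0_pos |]. intros al al_pos al_lt.
  destruct (rates al al_pos al_lt) as [al_le al_small].
  split; intros th hth.
  - destruct (relevant th) as [v [Hv Hv_le]]; [rewrite Rabs_right; lra |].
    rewrite sgn_of_pos in Hv_le by lra.
    apply (cond_mgf_bound f1 f2 y th a b 0 y y (-1) v); auto; try lra.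
    + rewrite Rabs_left; lra.
    + intro x. rewrite <- exp_plus. f_equal. ring.
    + left; apply exp_pos.
  - destruct (relevant th) as [v [Hv Hv_le]]; [rewrite Rabs_left; lra |].
    rewrite sgn_of_neg in Hv_le by lra.
    apply (cond_mgf_bound f1 f2 y th a b 0 y y 1 v); auto; try lra.
    + apply Rabs_R1.
    + intro x. rewrite <- exp_plus. f_equal. ring.
    + left; apply exp_pos.
Qed.

Theorem mainTheorem4 (f1 f2 : R -> R) (y : R) :
  good_density f1 -> good_density f2 ->
  (forall d k, DUR f1 f2 y d k -> GTIP_Xt f1 f2 y ->
     exists a0, 0 < a0 /\ forall al, 0 < al -> al < a0 ->
       (forall th, k < th -> exists v,
          CondExp f1 f2 y th (fun x => exp (al * x)) v /\
          v <= exp (al * th) * (1 - al * d / 2)) /\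
       (forall th, th < - k -> exists v,
          CondExp f1 f2 y th (fun x => exp (- (al * x))) v /\
          v <= exp (- (al * th)) * (1 - al * d / 2))) /\
  (forall d k, PUR f1 f2 y d k -> GTIP_X f1 f2 y ->
     exists a0, 0 < a0 /\ forall al, 0 < al -> al < a0 ->
       (forall th, k < th -> exists v,
          CondExp f1 f2 y th (fun x => exp (al * (y - (x - th)))) v /\
          v <= exp (al * th) * (1 - al * d / 2)) /\
       (forall th, th < - k -> exists v,
          CondExp f1 f2 y th (fun x => exp (- (al * (y - (x - th))))) v /\
          v <= exp (- (al * th)) * (1 - al * d / 2))).
Proof.
  intros g1 g2. split; intros d k.
  - apply DUR_exponential_drift; assumption.
  - apply PUR_exponential_drift; assumption.
Qed.
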